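(* Let $G\le\operatorname{Homeo}(\mathfrak{C})$ be simple and vigorous. Let $D\in K_{\mathfrak{C}}$ and let $\gamma\in G$ satisfy $D\gamma\cap D=\varnothing$ and $D\gamma\cup D\neq\mathfrak{C}$. Let $\delta\in\operatorname{Homeo}(\mathfrak{C})$ fix every point of $\mathfrak{C}\setminus D$. Let $H=\langle G\cup\{[\delta,\gamma]\}\rangle$. Then $H$ is simple and vigorous. If moreover $G$ is finitely generated, then so is $H$.
   Context: $\mathfrak{C}$ denotes a Cantor space (a space homeomorphic to $\{0,1\}^\omega$). Groups of homeomorphisms act on the right, products composed left to right, and $[a,b]=a^{-1}b^{-1}ab$. $K_{\mathfrak{C}}$ denotes the set of non-empty proper clopen subsets of $\mathfrak{C}$. For $\gamma\in\operatorname{Homeo}(\mathfrak{C})$, $\operatorname{supp}(\gamma)=\{p\in\mathfrak{C}: p\gamma\neq p\}$. A subset $S\subseteq \operatorname{Homeo}(\mathfrak{C})$ is vigorous if for all clopen $A,B,C\subseteq\mathfrak{C}$ with $B,C$ non-empty proper subsets of $A$ there is $\gamma\in S$ with $\operatorname{supp}(\gamma)\subseteq A$ and $B\gamma\subseteq C$. *)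

From HB Require Import structures.
From mathcomp Require Import all_boot all_order all_algebra.
From mathcomp Require Import all_classical all_reals all_analysis.
Set Implicit Arguments. Unset Strict Implicit. Unset Printing Implicit Defensive.
Local Open Scope classical_set_scope.

Notation CS := cantor_space.

Definition homeo (f : CS -> CS) : Prop :=
  exists g : CS -> CS, [/\ cancel f g, cancel g f, continuous f & continuous g].

(* The (unique) two-sided inverse of a bijection; junk value otherwise. *)
Definition finv (f : CS -> CS) : CS -> CS :=
  match pselect (exists g : CS -> CS, cancel f g /\ cancel g f) with
  | left h => projT1 (cid h)
  | right _ => f
  end.

(* Right action, products composed left to right: p (a * b) = (p a) b. *)
Definition hmul (a b : CS -> CS) : CS -> CS := b \o a.

Definition hcomm (a b : CS -> CS) : CS -> CS :=
  hmul (hmul (hmul (finv a) (finv b)) a) b.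

Definition is_group (G : set (CS -> CS)) : Prop :=
  [/\ G `<=` homeo, G id,
      (forall a b, G a -> G b -> G (hmul a b)) &
      (forall a, G a -> G (finv a))].

Definition gen (S : set (CS -> CS)) : set (CS -> CS) :=
  \bigcap_(H in [set H | is_group H /\ S `<=` H]) H.

Definition normal_in (N G : set (CS -> CS)) : Prop :=
  forall g n, G g -> N n -> N (hmul (hmul (finv g) n) g).

Definition simple_group (G : set (CS -> CS)) : Prop :=
  is_group G /\ G <> [set id] /\
  forall N, is_group N -> N `<=` G -> normal_in N G -> N = [set id] \/ N = G.

Definition supp (g : CS -> CS) : set CS := [set p | g p <> p].

Definition vigorous (S : set (CS -> CS)) : Prop :=
  forall A B C : set CS, clopen A -> clopen B -> clopen C ->
    B <> set0 -> C <> set0 -> B `<` A -> C `<` A ->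
    exists g, S g /\ supp g `<=` A /\ g @` B `<=` C.

Definition K_C (D : set CS) : Prop := [/\ clopen D, D <> set0 & D <> setT].

Definition fin_gen (G : set (CS -> CS)) : Prop :=
  exists F : set (CS -> CS), finite_set F /\ gen F = G.

(* Vigorousness and finite generation pass from G to H directly.  For simplicity let
   N be a non-trivial normal subgroup of H; we show that N contains G and [delta, gamma].
   1. [simple_vigorous_normal]: a subgroup normalised by a simple vigorous group G
      and containing some n <> id contains G.  Indeed n moves a clopen set V off
      itself, vigorousness yields non-commuting a, b supported in V, and
      [[a^-1, n], b] = [a, b] is a non-trivial element of the normal subgroup
      G `&` N of G.
   2. [dstab_all]: the elements g of G with [delta, g] in N form a subgroup of G.
      It contains the elements fixing D (they commute with delta) and those fixing
      gamma D; a pushing argument based on vigorousness then shows that it contains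
      every element supported in a proper clopen set.  These include a non-trivial
      element with all its conjugates, so by simplicity the subgroup is G, and
      taking g = gamma gives [delta, gamma] in N. *)

From Pilot Require Import Defs.
From mathcomp Require Import all_boot all_classical all_reals all_analysis.
Local Open Scope classical_set_scope.
(* [finv] would otherwise denote the inverse of [fingraph]. *)
Local Notation finv := Defs.finv.

Lemma homeo_can f : homeo f -> cancel f (finv f) /\ cancel (finv f) f.
Proof.
case=> g [fg gf _ _]; rewrite /finv; case: pselect => [h|nh]; last first.
  by exfalso; apply: nh; exists g.
by case: (cid h) => g' [].
Qed.

Lemma finvK {f} : homeo f -> forall x, finv f (f x) = x.
Proof. by move=> /homeo_can[]. Qed.

Lemma finvKV {f} : homeo f -> forall x, f (finv f x) = x.
Proof. by move=> /homeo_can[]. Qed.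

Lemma finv_uniq f g : homeo f -> (forall x, f (g x) = x) -> finv f = g.
Proof. by move=> hf fg; apply: funext => x; rewrite -{1}(fg x) finvK. Qed.

Lemma homeo_finv {f} : homeo f -> homeo (finv f).
Proof.
move=> hf; have [g [fg gf cf cg]] := hf.
have -> : finv f = g by apply: finv_uniq => // x; rewrite gf.
by exists f; split.
Qed.

Lemma homeo_inj {f} : homeo f -> injective f.
Proof. by move=> hf x y e; rewrite -(finvK hf x) e finvK. Qed.

Lemma homeo_cont {f} : homeo f -> continuous f.
Proof. by case=> g [_ _ cf _]. Qed.

Lemma homeo_id : homeo id.
Proof. by exists id; split => // x; exact: cvg_id. Qed.

Lemma homeo_hmul {a b} : homeo a -> homeo b -> homeo (hmul a b).
Proof.
move=> ha hb; exists (finv a \o finv b); split => x /=.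
- by rewrite /hmul /= !finvK.
- by rewrite /hmul /= !finvKV.
- by apply: continuous_comp; exact: homeo_cont.
- by apply: continuous_comp; apply/homeo_cont/homeo_finv.
Qed.

Lemma finv_hmul a b : homeo a -> homeo b -> finv (hmul a b) = hmul (finv b) (finv a).
Proof.
move=> ha hb; apply: finv_uniq; first exact: homeo_hmul.
by move=> x; rewrite /hmul /= !finvKV.
Qed.

Lemma finv_finv a : homeo a -> finv (finv a) = a.
Proof. by move=> ha; apply: finv_uniq; [exact: homeo_finv | exact: finvK]. Qed.

Lemma finv_id : finv id = id.
Proof. exact: finv_uniq homeo_id _. Qed.

Lemma homeo_hcomm {a b} : homeo a -> homeo b -> homeo (hcomm a b).
Proof. by move=> ha hb; do 3! apply: homeo_hmul => //; apply: homeo_finv. Qed.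

Lemma finv_hcomm a b : homeo a -> homeo b -> finv (hcomm a b) = hcomm b a.
Proof.
move=> ha hb; apply: finv_uniq; first exact: homeo_hcomm.
by move=> x; rewrite /hcomm /hmul /= !(finvK ha, finvK hb, finvKV ha, finvKV hb).
Qed.

Lemma hcomm_id_commute {a b} : homeo a -> homeo b -> hcomm a b = id ->
  forall p, a (b p) = b (a p).
Proof.
move=> ha hb e p; have := congr1 (fun f => f (a (b p))) e.
by rewrite /hcomm /hmul /= finvK // finvK.
Qed.

(* Conjugation [g^h = h^-1 g h]; as a map, [conjh h g = h \o g \o h^-1]. *)
Definition conjh (h g : CS -> CS) : CS -> CS := hmul (hmul (finv h) g) h.

Lemma homeo_conjh {h g} : homeo h -> homeo g -> homeo (conjh h g).
Proof. by move=> hh hg; do 2! apply: homeo_hmul => //; apply: homeo_finv. Qed.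

Lemma conjh_id h : homeo h -> conjh h id = id.
Proof. by move=> hh; apply: funext => p; rewrite /conjh /hmul /= finvKV. Qed.

Lemma conjh1 g : conjh id g = g.
Proof. by rewrite /conjh finv_id. Qed.

Lemma conjh_mul h a b : homeo h -> conjh h (hmul a b) = hmul (conjh h a) (conjh h b).
Proof. by move=> hh; apply: funext => p; rewrite /conjh /hmul /= finvK. Qed.

Lemma finv_conjh h a : homeo h -> homeo a -> finv (conjh h a) = conjh h (finv a).
Proof.
move=> hh ha; apply: finv_uniq; first exact: homeo_conjh.
by move=> x; rewrite /conjh /hmul /= !(finvK hh, finvKV ha, finvKV hh).
Qed.

Lemma conjh_conjh h g l : homeo h -> homeo g ->
  conjh h (conjh g l) = conjh (hmul g h) l.
Proof. by move=> hh hg; apply: funext => p; rewrite /conjh finv_hmul // /hmul /=. Qed.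

Lemma grp_homeo {K} : is_group K -> K `<=` homeo. Proof. by case. Qed.
Lemma grp_id {K} : is_group K -> K id. Proof. by case. Qed.
Lemma grp_mul {K a b} : is_group K -> K a -> K b -> K (hmul a b).
Proof. by case=> _ _ m _; apply: m. Qed.
Lemma grp_inv {K a} : is_group K -> K a -> K (finv a).
Proof. by case=> _ _ _ i; apply: i. Qed.

Lemma grp_conj {K h g} : is_group K -> K h -> K g -> K (conjh h g).
Proof. by move=> gK Kh Kg; do 2! apply: grp_mul => //; exact: grp_inv. Qed.

Lemma grp_comm {K a b} : is_group K -> K a -> K b -> K (hcomm a b).
Proof. by move=> gK Ka Kb; do 3! apply: grp_mul => //; exact: grp_inv. Qed.

Lemma is_group_homeo : is_group homeo.
Proof.
by split => //; [exact: homeo_id | move=> a b; exact: homeo_hmul |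
  move=> a; exact: homeo_finv].
Qed.

Lemma is_groupI {K L} : is_group K -> is_group L -> is_group (K `&` L).
Proof.
move=> gK gL; split.
- by move=> x [Kx _]; exact: grp_homeo Kx.
- by split; [exact: grp_id gK | exact: grp_id gL].
- by move=> a b [Ka La] [Kb Lb]; split; exact: grp_mul.
- by move=> a [Ka La]; split; exact: grp_inv.
Qed.

Lemma normal_hcomm {N G g n} : is_group N -> normal_in N G -> G g -> N n ->
  N (hcomm g n) /\ N (hcomm n g).
Proof.
move=> gN nN Gg Nn; split.
  exact: grp_mul gN (nN _ _ Gg (grp_inv gN Nn)) Nn.
change (N (hmul (finv n) (conjh g n))).
by apply: (grp_mul gN); [exact: grp_inv | exact: nN].
Qed.

Lemma normal_in_sub {N G H} : G `<=` H -> normal_in N H -> normal_in N G.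
Proof. by move=> GH nN g n /GH; exact: nN. Qed.

Lemma gen_sub S K : is_group K -> S `<=` K -> gen S `<=` K.
Proof. by move=> gK SK x gx; apply: gx; split. Qed.

Lemma sub_gen S : S `<=` gen S.
Proof. by move=> x Sx K [_ SK]; apply: SK. Qed.

Lemma gen_group S : S `<=` homeo -> is_group (gen S).
Proof.
move=> Sh; split.
- exact: gen_sub is_group_homeo Sh.
- by move=> K [gK _]; exact: grp_id.
- by move=> a b ga gb K [gK SK]; apply: grp_mul => //; [apply: ga | apply: gb].
- by move=> a ga K [gK SK]; apply: grp_inv => //; apply: ga.
Qed.

Lemma fin_gen_adjoin G x : G `<=` homeo -> homeo x ->
  fin_gen G -> fin_gen (gen (G `|` [set x])).
Proof.
move=> Gh hx [F [fF eF]]; exists (F `|` [set x]); split.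
  by rewrite finite_setU; split => //; exact: finite_set1.
have FG : F `<=` G by rewrite -eF; exact: sub_gen.
have gF : is_group (gen (F `|` [set x])) by apply: gen_group => y [/FG/Gh|->].
have gG : is_group (gen (G `|` [set x])) by apply: gen_group => y [/Gh|->].
apply/seteqP; split; apply: gen_sub => // y [Gy|->]; try by apply: sub_gen; right.
  by apply: sub_gen; left; exact: FG.
by rewrite -eF in Gy; apply: gen_sub Gy => // z Fz; apply: sub_gen; left.
Qed.

Lemma simple_conjugates_sub {G K g} : simple_group G -> is_group K -> G g -> g <> id ->
  (forall h, G h -> K (conjh h g)) -> G `<=` K.
Proof.
move=> [gG [_ sG]] gK Gg g1 Kg.
have Gh := grp_homeo gG.
pose L := [set x | G x /\ forall h, G h -> K (conjh h x)].
have gL : is_group L.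
  split.
  - by move=> x [/Gh].
  - split; first exact: grp_id.
    by move=> h /Gh hh; rewrite conjh_id //; exact: grp_id.
  - move=> a b [Ga Ka] [Gb Kb]; split; first exact: grp_mul.
    move=> h Gh'; rewrite conjh_mul; last exact: Gh.
    by apply: grp_mul; [|exact: Ka|exact: Kb].
  - move=> a [Ga Ka]; split; first exact: grp_inv.
    move=> h Gh'; rewrite -finv_conjh; [|exact: Gh|exact: Gh].
    by apply: grp_inv; [|exact: Ka].
have nL : normal_in L G.
  move=> h x Gh' [Gx Kx]; split; first exact: grp_conj.
  by move=> k Gk; rewrite conjh_conjh; [apply: Kx; exact: grp_mul | exact: Gh | exact: Gh].
have [L1|LG] := sG L gL (fun x (h : L x) => proj1 h) nL.
  by have : L g by []; rewrite L1.
move=> x; rewrite -LG => -[_ /(_ id (grp_id gG))].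
by rewrite conjh1.
Qed.

Lemma set_neq0 {A : set CS} : A !=set0 -> A <> set0.
Proof. by move/set0P/eqP. Qed.

Lemma supp_fix {g} {A : set CS} : supp g `<=` A -> forall p, ~ A p -> g p = p.
Proof. by move=> s p nA; apply: contrapT => h; exact: nA (s _ h). Qed.

Lemma fix_supp {g} {A : set CS} : (forall p, ~ A p -> g p = p) -> supp g `<=` A.
Proof. by move=> f p gp; apply: contrapT => nA; exact: gp (f _ nA). Qed.

Lemma fix_finv {a} {A : set CS} : homeo a -> (forall p, A p -> a p = p) ->
  forall p, A p -> finv a p = p.
Proof. by move=> ha h p Ap; rewrite -{1}(h p Ap) finvK. Qed.

Lemma commute_disjoint {f g : CS -> CS} {V : set CS} :
  injective f -> injective g -> (forall p, ~ V p -> f p = p) ->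
  (forall p, V p -> g p = p) -> forall p, f (g p) = g (f p).
Proof.
move=> fi gi fV gV p; have [Vp|nVp] := pselect (V p).
  rewrite gV //; have [Vfp|nVfp] := pselect (V (f p)); first by rewrite gV.
  by have /fi fpp := fV _ nVfp; rewrite fpp in nVfp.
rewrite [f p]fV //; have [Vgp|nVgp] := pselect (V (g p)); last by rewrite fV.
by have /gi gpp := gV _ Vgp; rewrite gpp in Vgp.
Qed.

Lemma image_homeo {f} (A : set CS) : homeo f -> f @` A = finv f @^-1` A.
Proof.
move=> hf; apply/seteqP; split => x; first by case=> y Ay <-; rewrite /preimage /= finvK.
by move=> Ax; exists (finv f x) => //; rewrite finvKV.
Qed.

Lemma clopen_image {f} {A : set CS} : homeo f -> clopen A -> clopen (f @` A).
Proof.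
move=> hf cA; rewrite image_homeo //.
by apply: preimage_clopen => //; apply/homeo_cont/homeo_finv.
Qed.

Lemma supp_conjh {h g} {V : set CS} : homeo h -> supp g `<=` V ->
  supp (conjh h g) `<=` h @` V.
Proof.
move=> hh sg; apply: fix_supp => p nVp; rewrite /conjh /hmul /= (supp_fix sg) ?finvKV //.
by move=> Vp; apply: nVp; exists (finv h p) => //; rewrite finvKV.
Qed.

Lemma clopen_separate {p q : CS} : p <> q -> exists W, [/\ clopen W, W p & ~ W q].
Proof. by move/eqP/cantor_zero_dimensional => [W]; exists W. Qed.

Lemma other_point {V : set CS} {p : CS} : open V -> V p -> exists q, q <> p /\ V q.
Proof.
move=> oV Vp; have [_ lp] := cantor_perfect.
have : limit_point [set: CS] p by rewrite lp.
move=> /(_ V (open_nbhs_nbhs (conj oV Vp))) [y [/eqP yp _ Vy]].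
by exists y.
Qed.

Lemma clopen_split3 {V : set CS} : clopen V -> V !=set0 ->
  exists P1 P2 P3 : set CS, [/\ [/\ clopen P1, clopen P2 & clopen P3],
    [/\ P1 `<=` V, P2 `<=` V & P3 `<=` V],
    [/\ P1 !=set0, P2 !=set0 & P3 !=set0] &
    [/\ forall x, P1 x -> ~ P2 x, forall x, P1 x -> ~ P3 x &
        forall x, P2 x -> ~ P3 x]].
Proof.
move=> cV [p Vp]; have [q [qp Vq]] := other_point cV.1 Vp.
have [W1 [cW1 W1p W1q]] := clopen_separate (nesym qp).
have [r [rp [Vr W1r]]] := other_point (clopenI cV cW1).1 (conj Vp W1p).
have [W2 [cW2 W2p W2r]] := clopen_separate (nesym rp).
exists (V `&` ~` W1), (V `&` W1 `&` ~` W2), (V `&` W1 `&` W2); split.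
- by split; do ?apply: clopenI => //; exact: clopenC.
- by split => x [] // [].
- by split; [exists q | exists r | exists p].
- by split => x; [move=> [_ nW1] [[_ W1x] _] | move=> [_ nW1] [[_ W1x] _] |
    move=> [_ nW2] [_ W2x]].
Qed.

Lemma displaced_clopen {n} : homeo n -> n <> id ->
  exists V : set CS, [/\ clopen V, V !=set0 & forall v, V v -> ~ V (n v)].
Proof.
move=> hn n1; have [p np] : exists p, n p <> p.
  apply: contrapT => h; apply: n1; apply: funext => p.
  by apply: contrapT => np; apply: h; exists p.
have [W [cW Wp Wnp]] := clopen_separate (nesym np).
exists (W `&` (n @^-1` ~` W)); split; last by move=> v [_ ?] [].
  by apply: clopenI => //; apply: preimage_clopen; [exact: clopenC | exact: homeo_cont].
by exists p; split.
Qed.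

(* A vigorous group contains two non-commuting elements supported in any non-empty
   clopen set: one pushes a piece [P1] into [P2], the other pushes [P2] into [P3]
   while fixing [P1]. *)
Lemma vigorous_noncommuting {G} {V : set CS} : vigorous G -> G `<=` homeo ->
  clopen V -> V !=set0 ->
  exists a b, [/\ G a, G b, supp a `<=` V, supp b `<=` V & hcomm a b <> id].
Proof.
move=> vG Gh cV V0.
have [P1 [P2 [P3 [[c1 c2 c3] [s1 s2 s3] [n1 n2 n3] [d12 d13 d23]]]]] :=
  clopen_split3 cV V0.
have [[x1 h1] [x2 h2] [x3 h3]] := And3 n1 n2 n3.
have [b [Gb [sb ib]]] : exists b, G b /\ supp b `<=` V /\ b @` P1 `<=` P2.
  apply: vG => //; [exact: set_neq0 | exact: set_neq0 | |].
  - by split => // /(_ x3 (s3 _ h3)) /d13; apply.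
  - by split => // /(_ x3 (s3 _ h3)) /d23; apply.
have [a [Ga [sa ia]]] : exists a, G a /\ supp a `<=` V `&` ~` P1 /\ a @` P2 `<=` P3.
  apply: vG => //;
    [apply: clopenI => //; exact: clopenC | exact: set_neq0 | exact: set_neq0 | |].
  - split; first by move=> x P2x; split; [exact: s2 | move/d12; apply].
    by move=> /(_ x3 (conj (s3 _ h3) (fun h => d13 _ h h3))) /d23; apply.
  - split; first by move=> x P3x; split; [exact: s3 | move/d13; apply].
    by move=> /(_ x2 (conj (s2 _ h2) (fun h => d12 _ h h2))); exact: d23 _ h2.
exists a, b; split => //; first by move=> p /sa [].
move=> /(hcomm_id_commute (Gh _ Ga) (Gh _ Gb)) /(_ x1).
rewrite [a x1](supp_fix sa); last by case.
move=> abx1; apply: (d23 (b x1)); first exact: ib.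
by rewrite -abx1; apply: ia; exact: imageP (ib _ (imageP _ h1)).
Qed.

(* If [a] and [b] are supported in [V] and [n] moves [V] off itself, then the
   conjugate [c = n^-1 a n] is supported off [V], so it commutes with [a] and [b]
   and the double commutator [[[a^-1, n], b] = c a^-1 b^-1 a c^-1 b] collapses to
   [[a, b]]. *)
Lemma commutator_displaced {a b n} {V : set CS} : homeo a -> homeo b -> homeo n ->
  supp a `<=` V -> supp b `<=` V -> (forall v, V v -> ~ V (n v)) ->
  hcomm (hcomm (finv a) n) b = hcomm a b.
Proof.
move=> ha hb hn sa sb Vn; pose c := conjh n a.
have fc v : V v -> c v = v.
  move=> Vv; rewrite /c /conjh /hmul /= (supp_fix sa) ?finvKV //.
  by move=> Vnv; apply: (Vn _ Vnv); rewrite finvKV.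
have cc f : injective f -> (forall p, ~ V p -> f p = p) -> forall r, f (c r) = c (f r).
  by move=> fi fV; apply: commute_disjoint fi (homeo_inj (homeo_conjh hn ha)) fV fc.
have ha' := homeo_finv ha.
apply: funext => r.
rewrite {1}/hcomm finv_hcomm // /hcomm /hmul /= finv_finv //.
have E1 := cc _ (homeo_inj ha') (fix_finv ha (supp_fix sa)) r.
have E2 := cc _ (homeo_inj (homeo_finv hb)) (fix_finv hb (supp_fix sb)) (finv a r).
have E3 := cc _ (homeo_inj ha) (supp_fix sa) (finv b (finv a r)).
move: E1 E2 E3; rewrite /c /conjh /hmul /= => -> -> ->.
by rewrite finvK // finvK // finvKV.
Qed.

(* In a simple vigorous group [G], a subgroup [N] normalised by [G] that contains a
   non-identity element [n] contains [G]: otherwise [G `&` N] is trivial, yet for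
   non-commuting [a], [b] supported in a clopen set displaced by [n], the element
   [[a^-1, n], b] lies in [N] and equals [[a, b]], a non-trivial element of [G]. *)
Lemma simple_vigorous_normal {G N n} : simple_group G -> vigorous G -> is_group N ->
  normal_in N G -> N n -> n <> id -> G `<=` N.
Proof.
move=> [gG [_ sG]] vG gN nN Nn n1.
have nGN : normal_in (G `&` N) G.
  by move=> g x Gg [Gx Nx]; split; [exact: grp_conj | exact: nN].
have [GN1|GNG] := sG _ (is_groupI gG gN) (fun x h => h.1) nGN; last first.
  by rewrite -GNG => x [].
have hn := grp_homeo gN _ Nn.
have [V [cV V0 Vn]] := displaced_clopen hn n1.
have [a [b [Ga Gb sa sb ab]]] := vigorous_noncommuting vG (grp_homeo gG) cV V0.
have [ha hb] := (grp_homeo gG _ Ga, grp_homeo gG _ Gb).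
have x_GN : (G `&` N) (hcomm (hcomm (finv a) n) b).
  split; first by rewrite (commutator_displaced ha hb hn sa sb Vn); exact: grp_comm.
  have [Nan _] := normal_hcomm gN nN (grp_inv gG Ga) Nn.
  by have [_] := normal_hcomm gN nN Gb Nan.
by move: x_GN; rewrite GN1 (commutator_displaced ha hb hn sa sb Vn).
Qed.

Lemma vigorous_sup {G H} : G `<=` H -> vigorous G -> vigorous H.
Proof.
move=> GH vG A B C cA cB cC B0 C0 BA CA.
by have [g [Gg sg]] := vG A B C cA cB cC B0 C0 BA CA; exists g; split; [exact: GH|].
Qed.

Lemma vigorous_nontrivial {G} {A : set CS} : vigorous G -> clopen A -> A !=set0 ->
  exists g, [/\ G g, supp g `<=` A & g <> id].
Proof.
move=> vG cA A0.
have [P1 [P2 [P3 [[c1 c2 _] [s1 s2 s3] [n1 n2 [x3 h3]] [d12 d13 d23]]]]] :=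
  clopen_split3 cA A0.
have [g [Gg [sg ig]]] := vG A P1 P2 cA c1 c2 (set_neq0 n1) (set_neq0 n2)
  (conj s1 (fun AP1 => d13 _ (AP1 _ (s3 _ h3)) h3))
  (conj s2 (fun AP2 => d23 _ (AP2 _ (s3 _ h3)) h3)).
exists g; split => // g1; have [x1 h1] := n1.
by have := ig _ (imageP g h1); rewrite g1; exact: d12 _ h1.
Qed.

(* Let [X1], [X2] be disjoint non-empty clopen sets not covering the
   Cantor space, and let [P] be closed under products and contain every element of the
   vigorous group [G] fixing [X1] or [X2] pointwise. Then some element of [P] pushes
   [X1] into any clopen [W] meeting the complement of [X1]: first push [X1] off
   [X1 `|` X2] fixing [X2], then, if needed, push its image into [W] fixing [X1]. *)
Lemma vigorous_push {G P} {X1 X2 W : set CS} : vigorous G -> G `<=` homeo ->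
  clopen X1 -> clopen X2 -> X1 !=set0 -> X2 !=set0 -> (forall x, X1 x -> ~ X2 x) ->
  (exists e, ~ X1 e /\ ~ X2 e) ->
  (forall g, G g -> (forall p, X1 p -> g p = p) -> P g) ->
  (forall g, G g -> (forall p, X2 p -> g p = p) -> P g) ->
  (forall a b, P a -> P b -> P (hmul a b)) ->
  clopen W -> (exists w, W w /\ ~ X1 w) ->
  exists m, P m /\ forall x, X1 x -> W (m x).
Proof.
move=> vG Gh c1 c2 [x1 h1] [x2 h2] d [e [e1 e2]] P1 P2 Pm cW [w [Ww nw]].
have cE : clopen (~` X1 `&` ~` X2) by apply: clopenI; exact: clopenC.
have [m1 [Gm1 [sm1 im1]]] : exists m1, G m1 /\ supp m1 `<=` ~` X2 /\
    m1 @` X1 `<=` ~` X1 `&` ~` X2.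
  apply: vG => //; try exact: clopenC.
  - by apply: set_neq0; exists x1.
  - by apply: set_neq0; exists e.
  - by split; [move=> x /d | move=> /(_ e e2)].
  - by split; [move=> x [] | move=> /(_ x1 (d _ h1)) []].
have Pm1 : P m1 by apply: P2 => // p X2p; apply: (supp_fix sm1) => /(_ X2p).
have [U1W|nU1W] := pselect (~` X1 `<=` W).
  by exists m1; split => // x X1x; apply: U1W; have [] := im1 _ (imageP _ X1x).
have [m2 [Gm2 [sm2 im2]]] : exists m2, G m2 /\ supp m2 `<=` ~` X1 /\
    m2 @` (m1 @` X1) `<=` W `&` ~` X1.
  apply: vG => //; try exact: clopenC.
  - exact: clopen_image (Gh _ Gm1) c1.
  - by apply: clopenI => //; exact: clopenC.
  - by apply: set_neq0; exists (m1 x1); exact: imageP.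
  - by apply: set_neq0; exists w.
  - split; first by move=> y /im1 [].
    by move=> /(_ x2 (fun h => d _ h h2)) /im1 [_]; apply.
  - split; first by move=> y [].
    by move=> h; apply: nU1W => y /h [].
have Pm2 : P m2 by apply: P1 => // p X1p; apply: (supp_fix sm2) => /(_ X1p).
exists (hmul m1 m2); split; first exact: Pm.
by move=> x X1x; have [] := im2 _ (imageP _ (imageP _ X1x)).
Qed.

Section DeltaCommutator.
Variables (G N : set (CS -> CS)) (D : set CS) (gamma delta : CS -> CS).
Hypothesis groupG : is_group G.
Hypothesis groupN : is_group N.
Hypothesis subGN : G `<=` N.
Hypothesis normalN : normal_in N G.
Hypothesis homeo_delta : homeo delta.
Hypothesis delta_fix : forall p, ~ D p -> delta p = p.

Definition dstab : set (CS -> CS) := [set g | G g /\ N (hcomm delta g)].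

(* [dstab] is a subgroup, by the identities [[d, gh] = [d, h] [d, g]^h] and
   [[d, g^-1] = ([d, g]^-1)^(g^-1)]. *)
Lemma dstab_group : is_group dstab.
Proof.
have Gh := grp_homeo groupG; split.
- by move=> g [/Gh].
- split; first exact: grp_id.
  have -> : hcomm delta id = id.
    by apply: funext => p; rewrite /hcomm /hmul /= finv_id /= finvKV.
  exact: grp_id.
- move=> g h [Gg Ng] [Gh' Nh]; split; first exact: grp_mul.
  have [hg hh] := (Gh _ Gg, Gh _ Gh').
  have -> : hcomm delta (hmul g h) = hmul (hcomm delta h) (conjh h (hcomm delta g)).
    apply: funext => p; rewrite /hcomm /conjh /hmul /= finv_hmul //= /hmul /=.
    by rewrite !(finvK hh, finvK homeo_delta, finvKV homeo_delta).
  by apply: grp_mul => //; apply: normalN.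
- move=> g [Gg Ng]; split; first exact: grp_inv.
  have hg := Gh _ Gg.
  have -> : hcomm delta (finv g) = conjh (finv g) (finv (hcomm delta g)).
    apply: funext => p; rewrite finv_hcomm // /hcomm /conjh /hmul /= finv_finv //.
    by rewrite !(finvK hg).
  by apply: normalN; exact: grp_inv.
Qed.

Lemma dstab_fixD g : G g -> (forall p, D p -> g p = p) -> dstab g.
Proof.
move=> Gg fg; split => //; have hg := grp_homeo groupG _ Gg.
have c := commute_disjoint (homeo_inj homeo_delta) (homeo_inj hg) delta_fix fg.
have -> : hcomm delta g = id.
  by apply: funext => p; rewrite /hcomm /hmul /= -c finvKV // finvKV.
exact: grp_id.
Qed.

Hypothesis G_gamma : G gamma.
Hypothesis normalN_comm : forall n, N n -> N (conjh (finv (hcomm delta gamma)) n).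

(* Elements [g] of [G] fixing [gamma D] pointwise: [gamma g^-1 gamma^-1] fixes [D], hence
   commutes with [delta], which gives [[delta, g] = (g^-1)^([delta, gamma]^-1) g]. *)
Lemma dstab_fix_gammaD g : G g -> (forall p, (gamma @` D) p -> g p = p) -> dstab g.
Proof.
move=> Gg fg; split => //.
have [hg hga] := (grp_homeo groupG _ Gg, grp_homeo groupG _ G_gamma).
pose k r := finv gamma (finv g (gamma r)).
have ik : injective k.
  by move=> r s /(homeo_inj (homeo_finv hga))/(homeo_inj (homeo_finv hg))/(homeo_inj hga).
have fk p : D p -> k p = p.
  by move=> Dp; rewrite /k (fix_finv hg fg) ?finvK //; exact: imageP.
have ck := commute_disjoint (homeo_inj homeo_delta) ik delta_fix fk.
have hc : homeo (hcomm delta gamma) by exact: homeo_hcomm.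
have -> : hcomm delta g = hmul (conjh (finv (hcomm delta gamma)) (finv g)) g.
  apply: funext => p; rewrite /conjh finv_finv // finv_hcomm // /hcomm /hmul /=.
  have := ck (finv gamma (finv delta p)); rewrite /k => <-.
  by rewrite !(finvK homeo_delta, finvKV hga).
apply: grp_mul => //; last exact: subGN.
by apply: normalN_comm; apply: subGN; exact: grp_inv.
Qed.

Hypothesis vigorousG : vigorous G.
Hypothesis clopenD : clopen D.
Hypothesis D_nonempty : D !=set0.
Hypothesis gammaD_disjoint : gamma @` D `&` D = set0.
Hypothesis gammaD_cover : gamma @` D `|` D <> setT.

Lemma gammaD_D x : (gamma @` D) x -> ~ D x.
Proof. by move=> GDx Dx; have : (gamma @` D `&` D) x by []; rewrite gammaD_disjoint. Qed.

Lemma D_gammaD x : D x -> ~ (gamma @` D) x.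
Proof. by move=> Dx /gammaD_D. Qed.

(* Every element of [G] supported in a proper clopen set [V] lies in [dstab]: some
   [m] in [dstab] pushes [D] or [gamma D] off [V], so [g^(m^-1)] fixes that set
   pointwise and belongs to [dstab], hence so does [g]. *)
Lemma dstab_local g (V : set CS) : G g -> clopen V -> (exists v, ~ V v) ->
  supp g `<=` V -> dstab g.
Proof.
move=> Gg cV [v nVv] sg; have Gh := grp_homeo groupG.
have hga := Gh _ G_gamma.
have cGD : clopen (gamma @` D) := clopen_image hga clopenD.
have GD0 : (gamma @` D) !=set0 by case: D_nonempty => x Dx; exists (gamma x); exact: imageP.
have [e [eD eGD]] : exists e, ~ D e /\ ~ (gamma @` D) e.
  apply: contrapT => h; apply: gammaD_cover; apply/seteqP; split => x // _.
  by apply: contrapT => nx; apply: h; exists x; split => ?; apply: nx; [right|left].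
have dmul a b : dstab a -> dstab b -> dstab (hmul a b) by exact: grp_mul dstab_group.
suff [X [m [Xfix Km mX]]] : exists X m, [/\ forall h, G h -> (forall p, X p -> h p = p) ->
    dstab h, dstab m & forall x, X x -> ~ V (m x)].
  have hm := Gh _ Km.1.
  have Kg' : dstab (conjh (finv m) g).
    apply: Xfix; first by apply: grp_conj => //; exact: grp_inv Km.1.
    by move=> p Xp; rewrite /conjh /hmul /= finv_finv // (supp_fix sg) ?finvK //; exact: mX.
  have -> : g = conjh m (conjh (finv m) g).
    by apply: funext => p; rewrite /conjh /hmul /= finv_finv // !finvKV.
  exact: grp_conj dstab_group Km Kg'.
have cV' : clopen (~` V) by exact: clopenC.
have [[w [nVw nDw]]|h] := pselect (exists w, ~ V w /\ ~ D w).
  have [m [Km mX]] := vigorous_push vigorousG Gh clopenD cGD D_nonempty GD0 D_gammaD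
    (ex_intro _ e (conj eD eGD)) dstab_fixD dstab_fix_gammaD dmul cV'
    (ex_intro _ w (conj nVw nDw)).
  by exists D, m; split => //; exact: dstab_fixD.
have Dv : D v by apply: contrapT => nDv; apply: h; exists v.
have [m [Km mX]] := vigorous_push vigorousG Gh cGD clopenD GD0 D_nonempty gammaD_D
  (ex_intro _ e (conj eGD eD)) dstab_fix_gammaD dstab_fixD dmul cV'
  (ex_intro _ v (conj nVv (D_gammaD _ Dv))).
by exists (gamma @` D), m; split => //; exact: dstab_fix_gammaD.
Qed.

(* If [G] is simple, [dstab] is all of [G]: it contains every [G]-conjugate of a
   non-identity element supported in the proper clopen set [~` gamma D]. *)
Lemma dstab_all : simple_group G -> G `<=` dstab.
Proof.
move=> sG; have Gh := grp_homeo groupG.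
have [x0 Dx0] := D_nonempty.
have cnGD : clopen (~` (gamma @` D)) by apply/clopenC/(clopen_image (Gh _ G_gamma)).
have [g [Gg sg g1]] :=
  vigorous_nontrivial vigorousG cnGD (ex_intro _ x0 (D_gammaD _ Dx0)).
apply: (simple_conjugates_sub sG dstab_group Gg g1) => h Gh'.
apply: (dstab_local _ (h @` ~` (gamma @` D))).
- exact: grp_conj.
- exact: clopen_image (Gh _ Gh') cnGD.
- exists (h (gamma x0)); case=> y nGDy /(homeo_inj (Gh _ Gh')) ygx0.
  by apply: nGDy; rewrite ygx0; exact: imageP.
- exact: supp_conjh (Gh _ Gh') sg.
Qed.

End DeltaCommutator.

Theorem proposition2p19 (G : set (CS -> CS)) (D : set CS) (gamma delta : CS -> CS) :
  simple_group G -> vigorous G ->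
  K_C D -> G gamma ->
  gamma @` D `&` D = set0 -> gamma @` D `|` D <> setT ->
  homeo delta -> (forall p, ~ D p -> delta p = p) ->
  let H := gen (G `|` [set hcomm delta gamma]) in
  (simple_group H /\ vigorous H) /\ (fin_gen G -> fin_gen H).
Proof.
move=> sG vG [cD D0 _] Gga GDD GDU hd fd H.
have [gG [G1 _]] := sG; have Gh := grp_homeo gG.
have hc : homeo (hcomm delta gamma) by apply: homeo_hcomm => //; exact: Gh.
have gH : is_group H by apply: gen_group => x [/Gh|->].
have GH : G `<=` H by move=> x Gx; apply: sub_gen; left.
have cH : H (hcomm delta gamma) by apply: sub_gen; right.
split; last exact: fin_gen_adjoin.
split; last exact: vigorous_sup GH vG.
split=> //; split.
  move=> H1; apply: G1; apply/seteqP; split=> [x /GH|x ->]; last exact: grp_id.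
  by rewrite H1.
move=> N gN NH nN.
have [[n [Nn n1]]|trivN] := pselect (exists n, N n /\ n <> id); last first.
  left; apply/seteqP; split=> [x Nx|x ->]; last exact: grp_id.
  by apply: contrapT => x1; apply: trivN; exists x.
right; have nNG := normal_in_sub GH nN.
have GN := simple_vigorous_normal sG vG gN nNG Nn n1.
have Nc : N (hcomm delta gamma).
  have nNc n' : N n' -> N (conjh (finv (hcomm delta gamma)) n').
    exact: nN (grp_inv gH cH).
  have D0' : D !=set0 by apply/set0P/eqP.
  by have [] := dstab_all G N D gamma delta gG gN GN
    nNG hd fd Gga nNc vG cD D0' GDD GDU sG _ Gga.
by apply/seteqP; split=> //; apply: gen_sub => // x [/GN|->].
Qed.
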